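(* In any one-dimensional robot game $(U,V)$, if two counter values $x,y\in\mathbb{Z}$ are winning, then $x+y$ is winning.
   Context: A robot game in dimension one is a pair $(U,V)$ of finite nonempty subsets of $\mathbb{Z}$; $U$ belongs to the reacher and $V$ to the opponent. From an initial counter value $x_0\in\mathbb{Z}$, a play proceeds in rounds: in a round starting at counter value $x$, the opponent chooses $v\in V$ and the counter becomes $x+v$, then the reacher chooses $u\in U$ and the counter becomes $x+v+u$, where the round ends. The reacher wins the play if some round ends at $0$; by convention the reacher wins immediately if the play starts at $0$. Strategies are functions from play prefixes to moves. A counter value $x$ is winning if the reacher has a strategy such that, against every opponent strategy, the play from $x$ is won by the reacher. *)

From mathcomp Require Import all_boot all_algebra.
Set Implicit Arguments. Unset Strict Implicit. Unset Printing Implicit Defensive.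
Import GRing.Theory.
Local Open Scope ring_scope.

(* A play prefix is recorded as the sequence of successive counter values
   (initial value, value after the opponent's move, value after the reacher's
   move, ...); moves are recoverable as consecutive differences. *)
Definition strategy := seq int -> int.

Fixpoint play (sigma tau : strategy) (x0 : int) (n : nat) : seq int :=
  match n with
  | O => [:: x0]
  | S n' =>
      let h := play sigma tau x0 n' in
      let y := last x0 h + tau h in
      let h' := rcons h y in
      rcons h' (y + sigma h')
  end.

Definition counter_at (sigma tau : strategy) (x0 : int) (n : nat) : int :=
  last x0 (play sigma tau x0 n).

Definition winning (U V : seq int) (x0 : int) : Prop :=
  exists sigma : strategy, (forall h, sigma h \in U) /\
    forall tau : strategy, (forall h, tau h \in V) ->
      exists n : nat, counter_at sigma tau x0 n = 0.

(* From x + y the reacher plays the winning strategy for x translated by y, so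
   the counter follows an x-play shifted by y; that play reaches 0, hence this
   one ends a round at y.  From the first such round on, the reacher forgets
   the history and plays the winning strategy for y. *)
From mathcomp Require Import all_boot all_algebra.
Set Implicit Arguments. Unset Strict Implicit.
Import GRing.Theory.
Local Open Scope ring_scope.

(* In a play prefix the round-end counter values sit at the even positions. *)
Fixpoint evens (s : seq int) : seq int :=
  if s is a :: t then a :: odds t else [::]
with odds (s : seq int) : seq int :=
  if s is _ :: t then evens t else [::].

Lemma evens_odds_cat s t :
  evens (s ++ t) = evens s ++ (if odd (size s) then odds t else evens t) /\
  odds (s ++ t) = odds s ++ (if odd (size s) then evens t else odds t).
Proof. by elim: s => [|a s [IHe IHo]] //=; rewrite IHe IHo; case: odd. Qed.

Lemma evens_cat s t : ~~ odd (size s) -> evens (s ++ t) = evens s ++ evens t.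
Proof. by rewrite (proj1 (evens_odds_cat s t)) => /negbTE ->. Qed.

Lemma evens_rcons_even s a :
  ~~ odd (size s) -> evens (rcons s a) = rcons (evens s) a.
Proof. by move=> es; rewrite -cats1 evens_cat // cats1. Qed.

Lemma evens_rcons_odd s a : odd (size s) -> evens (rcons s a) = evens s.
Proof. by rewrite -cats1 (proj1 (evens_odds_cat s _)) => ->; rewrite cats0. Qed.

Lemma size_evens s : size (evens s) = uphalf (size s).
Proof.
suff: size (evens s) = uphalf (size s) /\ size (odds s) = half (size s) by case.
by elim: s => [|a s [IHe IHo]] //=; rewrite IHe IHo.
Qed.

Lemma size_evens_even s : ~~ odd (size s) -> (size (evens s)).*2 = size s.
Proof.
by move=> /negbTE es; rewrite size_evens uphalf_half es -[RHS]odd_double_half es.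
Qed.

Section Plays.
Variables (sigma tau : strategy) (x0 : int).

Lemma size_play n : size (play sigma tau x0 n) = (n.*2).+1.
Proof. by elim: n => [|n IH] //=; rewrite !size_rcons IH. Qed.

Lemma play_cons n : exists t, play sigma tau x0 n = x0 :: t.
Proof.
elim: n => [|n [t IH]]; first by exists [::].
rewrite /=; set P := play _ _ _ n.
have -> : forall a b, rcons (rcons P a) b = x0 :: rcons (rcons t a) b.
  by move=> a b; rewrite /P IH.
by eexists.
Qed.

Lemma last_play a n : last a (play sigma tau x0 n) = counter_at sigma tau x0 n.
Proof. by rewrite /counter_at; have [t ->] := play_cons n. Qed.

Lemma evens_playS n :
  evens (play sigma tau x0 n.+1) =
  rcons (evens (play sigma tau x0 n)) (counter_at sigma tau x0 n.+1).
Proof.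
rewrite /counter_at /= last_rcons evens_rcons_even; last first.
  by rewrite size_rcons size_play /= odd_double.
by rewrite evens_rcons_odd // size_play /= odd_double.
Qed.

Lemma evens_play n :
  evens (play sigma tau x0 n) = [seq counter_at sigma tau x0 k | k <- iota 0 n.+1].
Proof.
elim: n => [|n IH] //; rewrite evens_playS IH.
by rewrite -[in RHS]addn1 iotaD map_cat cats1.
Qed.

Lemma play_first_visit y :
  (exists n, counter_at sigma tau x0 n = y) ->
  exists m A, [/\ play sigma tau x0 m = rcons A y, ~~ odd (size A) & y \notin evens A].
Proof.
move=> visit; have /ex_minnP[m /eqP hm minm] : exists n, counter_at sigma tau x0 n == y.
  by have [n <-] := visit; exists n.
case: m hm minm => [|m] hm minm; first by exists 0%N, [::]; rewrite -hm.
pose A := rcons (play sigma tau x0 m)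
            (last x0 (play sigma tau x0 m) + tau (play sigma tau x0 m)).
have oddP : odd (size (play sigma tau x0 m)) by rewrite size_play /= odd_double.
exists m.+1, A; split.
- by rewrite -hm /counter_at /= last_rcons.
- by rewrite /A size_rcons /= oddP.
- rewrite evens_rcons_odd // evens_play; apply/mapP => -[k].
  rewrite mem_iota add0n ltnS => /andP[_ k_le] /esym /eqP /minm.
  by rewrite ltnNge k_le.
Qed.

End Plays.

Section Switch.
Variables (y : int) (sx sy : strategy).

(* [(index y (evens h)).*2] is the position in [h] of the first round end at
   [y], so [sy] sees the history from that round on. *)
Definition switch_strategy : strategy := fun h =>
  if y \in evens h then sy (drop (index y (evens h)).*2 h)
  else sx [seq z - y | z <- h].

Lemma switch_strategy_in (U : seq int) :
  (forall h, sx h \in U) -> (forall h, sy h \in U) ->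
  forall h, switch_strategy h \in U.
Proof. by move=> sxU syU h; rewrite /switch_strategy; case: ifP. Qed.

Variables (tau : strategy) (x : int).

Let shifted_tau : strategy := fun h => tau [seq z + y | z <- h].

Lemma play_switch_shift n :
  y \notin evens (play switch_strategy tau (x + y) n) ->
  play switch_strategy tau (x + y) n = [seq z + y | z <- play sx shifted_tau x n].
Proof.
elim: n => [|n IH] //; rewrite evens_playS mem_rcons in_cons negb_or.
case/andP=> _ /[dup] /IH hP yP.
rewrite [LHS]/= [play sx _ _ _]/= !map_rcons hP (last_map (+%R^~ y)) -/(shifted_tau _).
set Q := play sx shifted_tau x n; set v := last x Q + shifted_tau Q.
have oddQ : odd (size [seq z + y | z <- Q]) by rewrite size_map size_play /= odd_double.
have -> : switch_strategy (rcons [seq z + y | z <- Q] (last x Q + y + shifted_tau Q))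
          = sx (rcons Q v).
  have yQ : y \in evens [seq z + y | z <- Q] = false by rewrite -hP (negbTE yP).
  rewrite /switch_strategy evens_rcons_odd // yQ map_rcons -map_comp.
  by rewrite (eq_map (fun z => addrK y z)) map_id addrAC addrK.
by rewrite /v (addrAC (last x Q)) (addrAC (last x Q + shifted_tau Q)).
Qed.

Lemma switch_visits n :
  counter_at sx shifted_tau x n = 0 ->
  exists m, counter_at switch_strategy tau (x + y) m = y.
Proof.
move=> hit; case: (boolP (y \in evens (play switch_strategy tau (x + y) n))).
  by rewrite evens_play => /mapP[k _ yk]; exists k.
move=> /play_switch_shift hP; exists n.
by move: hit; rewrite /counter_at hP (last_map (+%R^~ y)) => ->; rewrite add0r.
Qed.

Lemma play_switch_resume m A j :
  play switch_strategy tau (x + y) m = rcons A y -> ~~ odd (size A) ->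
  y \notin evens A ->
  play switch_strategy tau (x + y) (m + j) = A ++ play sy (fun h => tau (A ++ h)) y j.
Proof.
move=> hA evenA yA; elim: j => [|j IH]; first by rewrite addn0 hA cats1.
rewrite addnS [LHS]/= [play sy _ _ _]/= IH last_cat last_play.
set Q := play sy _ y j; set v := counter_at sy _ y j + tau (A ++ Q).
have [t hQ] := play_cons sy (fun h => tau (A ++ h)) y j.
have -> : switch_strategy (rcons (A ++ Q) v) = sy (rcons Q v).
  have evQ : evens (rcons Q v) = y :: odds (rcons t v) by rewrite /Q hQ.
  rewrite /switch_strategy rcons_cat evens_cat // mem_cat index_cat (negbTE yA).
  by rewrite evQ /= in_cons eqxx addn0 size_evens_even // drop_size_cat.
by rewrite /counter_at -!rcons_cat.
Qed.

End Switch.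

Theorem proposition1 (U V : seq int) (hU : U != [::]) (hV : V != [::])
  (x y : int) :
  winning U V x -> winning U V y -> winning U V (x + y).
Proof.
move=> [sx [sxU winx]] [sy [syU winy]].
exists (switch_strategy y sx sy); split; first exact: switch_strategy_in.
move=> tau tauV.
have [n0 hitx] := winx (fun h => tau [seq z + y | z <- h]) (fun h => tauV _).
have [m [A [hA evenA yA]]] := play_first_visit (switch_visits sy hitx).
have [j hity] := winy (fun h => tau (A ++ h)) (fun h => tauV _).
exists (m + j).
by rewrite /counter_at (play_switch_resume j hA) // last_cat last_play.
Qed.
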